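(* For every integer $n\ge 5$, the independence polynomial $I(T_{4,n};t)$ is unimodal and its mode belongs to $\{\lambda_{n+2},\lambda_{n+2}+1\}$, where $\lambda_{k}$ denotes the mode of the independence polynomial $I(P_k;t)$ of the path $P_k$ on $k$ vertices.
   Context: For a simple graph $G$, the independence polynomial is $I(G;t)=\sum_{k\ge 0}s_k(G)t^k$, where $s_k(G)$ is the number of independent sets (sets of pairwise non-adjacent vertices) of size $k$ in $G$. $P_k$ is the path on $k$ vertices; its independence polynomial is known to be unimodal. For integers $m\ge 3$, $n\ge 1$, the tadpole graph $T_{m,n}$ is the simple graph with vertex set $\{x_1,\dots,x_m,y_1,\dots,y_n\}$ and edges $\{x_i,x_{i+1}\}$ for $1\le i\le m-1$, $\{x_m,x_1\}$, $\{y_j,y_{j+1}\}$ for $1\le j\le n-1$, and $\{x_m,y_1\}$. A polynomial $\sum a_kt^k$ with nonnegative coefficients is unimodal if $a_0\le\cdots\le a_m\ge a_{m+1}\ge\cdots$ for some $m$; with $a_{-1}=0$, its mode is the unique $i$ with $a_{i-1}<a_i\ge a_{i+1}\ge a_{i+2}\ge\cdots$. *)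

From mathcomp Require Import all_boot.
Set Implicit Arguments. Unset Strict Implicit. Unset Printing Implicit Defensive.

(* A simple graph on a finType is given by a symmetric irreflexive rel. *)
Definition independent {T : finType} (e : rel T) (S : {set T}) : bool :=
  [forall x in S, forall y in S, ~~ e x y].

(* s_k(G): number of independent sets of size k; the coefficient sequence of I(G;t). *)
Definition indep_coef {T : finType} (e : rel T) (k : nat) : nat :=
  #|[set S : {set T} | independent e S && (#|S| == k)]|.

Definition path_rel (k : nat) : rel 'I_k :=
  fun u v => ((val u).+1 == val v) || ((val v).+1 == val u).

(* Tadpole T_{m,n} on 'I_(m+n): x_i is vertex i-1 (1<=i<=m), y_j is vertex m+j-1 (1<=j<=n). *)
Definition tad_edge (m n a b : nat) : bool :=
  [|| [&& a.+1 == b & b < m]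
    , [&& a == m.-1 & b == 0]               (* {x_m, x_1} *)
    , [&& m <= a, a.+1 == b & b < m + n]
    | [&& a == m.-1 & b == m] ].            (* {x_m, y_1} *)

Definition tadpole_rel (m n : nat) : rel 'I_(m + n) :=
  fun u v => tad_edge m n (val u) (val v) || tad_edge m n (val v) (val u).

Definition unimodal (a : nat -> nat) : Prop :=
  exists m, (forall i, i < m -> a i <= a i.+1) /\ (forall i, m <= i -> a i.+1 <= a i).

Definition is_mode (a : nat -> nat) (i : nat) : Prop :=
  (if i is j.+1 then a j < a i else 0 < a 0) /\ (forall j, i <= j -> a j.+1 <= a j).
Arguments tadpole_rel : clear implicits.
Arguments path_rel : clear implicits.

From mathcomp Require Import all_boot zify.
Set Implicit Arguments. Unset Strict Implicit. Unset Printing Implicit Defensive.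

(* Encode a set of vertices of a graph on 'I_m by its characteristic bit sequence.  The
   independent sets of P_k with j elements are then the bit sequences of length k with j ones and
   no two adjacent ones, of which there are C(k+1-j, j).  Splitting on the bits of the 4-cycle of
   T_{4,n} gives I(T_{4,n}) = (1 + t) I(P_{n+2}) + t I(P_n).  Comparing consecutive ratios of these
   binomials shows that the coefficients of I(P_{n+2}) rise strictly below its mode lam and fall
   weakly from lam on, while those of I(P_n) rise strictly below lam - 1 and fall weakly from lam
   on.  Hence the coefficients of I(T_{4,n}) rise strictly up to lam and fall weakly from lam + 1
   on, so the mode of I(T_{4,n}) is lam or lam + 1. *)

Fixpoint bitseqs (k : nat) : seq bitseq :=
  if k is k'.+1 then [seq false :: s | s <- bitseqs k'] ++ [seq true :: s | s <- bitseqs k']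
  else [:: [::]].

Lemma size_bitseqs k s : s \in bitseqs k -> size s = k.
Proof.
elim: k s => [|k IH] s /=; first by rewrite inE => /eqP ->.
by rewrite mem_cat => /orP [] /mapP [t /IH <- ->].
Qed.

Lemma mem_bitseqs s : s \in bitseqs (size s).
Proof.
elim: s => [|b s IH] //=.
by rewrite mem_cat; case: b; apply/orP; [right | left]; apply: map_f.
Qed.

Lemma uniq_bitseqs k : uniq (bitseqs k).
Proof.
elim: k => [|k IH] //=.
have cons_inj b : injective (cons b) by move=> s t [].
rewrite cat_uniq !(map_inj_uniq (cons_inj _ _)) IH andbT /=.
by apply/hasPn => _ /mapP [s _ ->]; apply/mapP => -[].
Qed.

Lemma count_bitseqsS (P : pred bitseq) k :
  count P (bitseqs k.+1) =
  count (fun s => P (false :: s)) (bitseqs k) + count (fun s => P (true :: s)) (bitseqs k).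
Proof. by rewrite /= count_cat !count_map. Qed.

(* Keeps [simpl] from expanding [bitseqs (4 + n)] when a prefix is split off by [count_bitseqsS]. *)
Arguments bitseqs : simpl never.

Definition set_of_bits m (s : bitseq) : {set 'I_m} := [set i : 'I_m | nth false s i].

Lemma perm_set_of_bits m : perm_eq [seq set_of_bits m s | s <- bitseqs m] (enum {set 'I_m}).
Proof.
apply: uniq_perm; rewrite ?enum_uniq //.
  rewrite map_inj_in_uniq ?uniq_bitseqs // => s t /size_bitseqs hs /size_bitseqs ht /setP est.
  apply: (@eq_from_nth _ false) => [|i]; first by rewrite hs ht.
  by rewrite hs => lt_im; have := est (Ordinal lt_im); rewrite !inE.
move=> S; rewrite mem_enum; apply/mapP.
pose s := mkseq (fun i => i \in [seq val x | x <- enum S]) m.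
exists s; first by have := mem_bitseqs s; rewrite size_mkseq.
by apply/setP => x; rewrite inE nth_mkseq // (mem_map val_inj) mem_enum.
Qed.

Lemma card_set_of_bits m s : size s = m -> #|set_of_bits m s| = count id s.
Proof.
move=> hs; rewrite cardsE cardE /enum_mem -enumT size_filter.
rewrite -[in RHS](mkseq_nth false s) hs /mkseq -val_enum_ord -map_comp count_map.
exact: eq_count.
Qed.

(* [count id s == j] in a form that [simpl] reduces on an explicit prefix of [s]. *)
Fixpoint has_weight (s : bitseq) (j : nat) : bool :=
  if s is b :: t then
    if b then (if j is j'.+1 then has_weight t j' else false) else has_weight t j
  else j == 0.

Lemma has_weightE s j : has_weight s j = (count id s == j).
Proof.
elim: s j => [|b s IH] j /=; first by rewrite eq_sym.
by case: b; case: j => [|j] //=; rewrite IH.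
Qed.

Lemma indep_coef_bitseqs m (e : rel 'I_m) (ok : pred bitseq) j :
    (forall s, size s = m -> independent e (set_of_bits m s) = ok s) ->
  indep_coef e j = count (fun s => ok s && has_weight s j) (bitseqs m).
Proof.
move=> okE; rewrite /indep_coef cardsE cardE /enum_mem -enumT size_filter.
rewrite -(permP (perm_set_of_bits m)) count_map; apply: eq_in_count => s /size_bitseqs hs /=.
by rewrite unfold_in okE // card_set_of_bits // has_weightE.
Qed.

Lemma eq_independent (T : finType) (e1 e2 : rel T) : e1 =2 e2 -> independent e1 =1 independent e2.
Proof.
move=> e12 S; apply/forall_inP/forall_inP => h x /h /forall_inP h';
  by apply/forall_inP => y /h'; rewrite e12.
Qed.

Lemma independentU (T : finType) (e1 e2 : rel T) S :
  independent [rel x y | e1 x y || e2 x y] S = independent e1 S && independent e2 S.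
Proof.
apply/forall_inP/andP => [h | [/forall_inP h1 /forall_inP h2] x xS].
  by split; apply/forall_inP => x /h /forall_inP h'; apply/forall_inP => y /h';
    rewrite negb_or => /andP [].
apply/forall_inP => y yS; rewrite negb_or.
by have /forall_inP/(_ y yS) -> := h1 x xS; have /forall_inP/(_ y yS) -> := h2 x xS.
Qed.

Fixpoint no_adjacent (s : bitseq) : bool :=
  if s is b :: t then ~~ (b && nth false t 0) && no_adjacent t else true.

Lemma no_adjacentP s : reflect (forall i, ~~ (nth false s i && nth false s i.+1)) (no_adjacent s).
Proof.
elim: s => [|b s IH] /=; first by constructor => i; rewrite nth_nil.
apply: (iffP andP) => [[nb /IH ns] [|i] //= | h].
by split; [apply: (h 0) | apply/IH => i; apply: (h i.+1)].
Qed.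

Lemma independent_path m s : size s = m ->
  independent (path_rel m) (set_of_bits m s) = no_adjacent s.
Proof.
move=> hs; apply/forall_inP/no_adjacentP => [h i | h x].
  apply/negP => /andP [si si1].
  have lt_i1m : i.+1 < m by rewrite -hs ltnNge; apply: contraL si1 => /(nth_default false) ->.
  have /h/forall_inP/(_ (Ordinal lt_i1m)) : Ordinal (ltnW lt_i1m) \in set_of_bits m s.
    by rewrite inE.
  by rewrite inE /path_rel /= eqxx => /(_ si1).
rewrite inE => sx; apply/forall_inP => y; rewrite inE /path_rel => sy.
by apply/negP => /orP [] /eqP exy; [move: (h x) | move: (h y)]; rewrite exy sx sy.
Qed.

Lemma independent_chord m a b s : a < m -> b < m ->
  independent [rel x y : 'I_m | ((val x == a) && (val y == b)) || ((val x == b) && (val y == a))]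
    (set_of_bits m s) = ~~ (nth false s a && nth false s b).
Proof.
move=> lt_am lt_bm; apply/forall_inP/negP => [h /andP [sa sb] | h x].
  have /h/forall_inP/(_ (Ordinal lt_bm)) : Ordinal lt_am \in set_of_bits m s by rewrite inE.
  by rewrite inE /= !eqxx => /(_ sb).
rewrite inE => sx; apply/forall_inP => y; rewrite inE => sy /=.
by apply/negP => /orP [] /andP [/eqP ex /eqP ey]; apply: h; rewrite -ex -ey sx sy.
Qed.

Lemma tadpole_relE n :
  tadpole_rel 4 n =2 [rel x y | path_rel (4 + n) x y
    || (((val x == 0) && (val y == 3)) || ((val x == 3) && (val y == 0)))].
Proof.
move=> x y; have := ltn_ord x; have := ltn_ord y.
rewrite /tadpole_rel /path_rel /tad_edge /=; lia.
Qed.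

Lemma independent_tadpole n s : size s = 4 + n ->
  independent (tadpole_rel 4 n) (set_of_bits (4 + n) s) =
  ~~ (nth false s 0 && nth false s 3) && no_adjacent s.
Proof.
move=> hs; rewrite (eq_independent (@tadpole_relE n)).
rewrite independentU independent_path // independent_chord //.
by rewrite andbC.
Qed.

Definition path_coef k j := 'C(k.+1 - j, j).

Lemma path_coef0 k : path_coef k 0 = 1.
Proof. exact: bin0. Qed.

Lemma path_coefSS k j : path_coef k.+2 j.+1 = path_coef k.+1 j.+1 + path_coef k j.
Proof.
rewrite /path_coef !subSS; have [le_jk1 | lt_k1j] := leqP j k.+1.
  by rewrite subSn // binS.
by rewrite !bin_small //; lia.
Qed.

Lemma count_andbF (T : Type) (P : pred T) (s : seq T) : count (fun x => P x && false) s = 0.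
Proof. by under eq_count do rewrite andbF; apply: count_pred0. Qed.

Lemma count_no_adjacent k j :
  count (fun s => no_adjacent s && has_weight s j) (bitseqs k) = path_coef k j.
Proof.
elim/ltn_ind: k j => -[|[|k]] IH j.
- by case: j => [|[|j]].
- by case: j => [|[|[|j]]].
rewrite count_bitseqsS IH //; case: j => [|j] /=.
  by rewrite count_andbF !path_coef0.
by rewrite count_bitseqsS /= count_pred0 IH // addn0 path_coefSS.
Qed.

Lemma indep_coef_path k j : indep_coef (path_rel k) j = path_coef k j.
Proof.
rewrite (@indep_coef_bitseqs _ _ no_adjacent) ?count_no_adjacent // => s.
exact: independent_path.
Qed.

Lemma indep_coef_tadpole n j : indep_coef (tadpole_rel 4 n) j =
  path_coef n.+2 j + (if j is j'.+1 then path_coef n.+2 j' + path_coef n j' else 0).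
Proof.
rewrite (@indep_coef_bitseqs _ _ (fun s => ~~ (nth false s 0 && nth false s 3) && no_adjacent s));
  last exact: independent_tadpole.
rewrite count_bitseqsS /= count_no_adjacent.
case: j => [|[|j]]; rewrite ?count_andbF //= !count_bitseqsS /= ?count_andbF ?count_pred0
  ?count_no_adjacent [path_coef n.+3 _]path_coefSS.
  by rewrite !path_coef0; lia.
by rewrite [path_coef n.+2 j.+1]path_coefSS; lia.
Qed.

(* For k = 2j + r + 1 the ratio of consecutive coefficients is
   C(j+r+1, j+1) / C(j+r+2, j) = (r+2)(r+1) / ((j+1)(j+r+2)). *)
Lemma ltn_path_coef_excess j r :
  (path_coef (j.*2 + r).+1 j < path_coef (j.*2 + r).+1 j.+1) = (j.+1 * (j + r).+2 < r.+2 * r.+1).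
Proof.
have -> : path_coef (j.*2 + r).+1 j = 'C((j + r).+2, j) by rewrite /path_coef; congr 'C(_, _); lia.
have -> : path_coef (j.*2 + r).+1 j.+1 = 'C((j + r).+1, j.+1).
  by rewrite /path_coef; congr 'C(_, _); lia.
have ratio : 'C((j + r).+1, j.+1) * (j.+1 * (j + r).+2) = 'C((j + r).+2, j) * (r.+2 * r.+1).
  have := mul_bin_left (j + r).+1 j; have := mul_bin_down (j + r).+2 j.
  have -> : (j + r).+1 - j = r.+1 by lia.
  have -> : (j + r).+2 - j = r.+2 by lia.
  move=> /= down left.
  rewrite mulnA [_ * j.+1]mulnC left -mulnA [_ * (j + r).+2]mulnC down.
  by rewrite [RHS]mulnC mulnA [r.+1 * _]mulnC.
rewrite -(@ltn_pmul2r (j.+1 * (j + r).+2) 'C((j + r).+2, j)) // ratio ltn_pmul2l // bin_gt0; lia.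
Qed.

Lemma path_coef_rise_excess k j :
  path_coef k j < path_coef k j.+1 -> exists r, k = (j.*2 + r).+1.
Proof.
move=> rise; exists (k - j.*2).-1; suff: j.*2 < k by lia.
rewrite ltnNge; apply: contraL rise => le_kj2.
by rewrite -leqNgt /path_coef bin_small //; lia.
Qed.

Lemma path_coef_rise_pred k j :
  path_coef k j.+1 < path_coef k j.+2 -> path_coef k j < path_coef k j.+1.
Proof.
move=> /[dup] /path_coef_rise_excess [r ->]; rewrite ltn_path_coef_excess.
have -> : (j.+1.*2 + r).+1 = (j.*2 + r.+2).+1 by lia.
rewrite ltn_path_coef_excess; nia.
Qed.

Lemma path_coef_rise_subSS k j :
  path_coef k.+2 j.+1 < path_coef k.+2 j.+2 -> path_coef k j < path_coef k j.+1.
Proof.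
move=> /[dup] /path_coef_rise_excess [r ek]; have -> : k = (j.*2 + r).+1 by lia.
rewrite -[(j.*2 + r).+3]/(j.+1.*2 + r).+1 !ltn_path_coef_excess; nia.
Qed.

Lemma path_coef_rise_addSS k j :
  path_coef k j < path_coef k j.+1 -> path_coef k.+2 j < path_coef k.+2 j.+1.
Proof.
move=> /[dup] /path_coef_rise_excess [r ->].
have -> : (j.*2 + r).+3 = (j.*2 + r.+2).+1 by lia.
rewrite !ltn_path_coef_excess; nia.
Qed.

Lemma path_coef_rise_threshold k :
  exists lam, forall j, (path_coef k j < path_coef k j.+1) = (j < lam).
Proof.
have [|lam not_rise_lam lam_min] := ex_minnP (P := fun j => path_coef k j >= path_coef k j.+1).
  by exists k; rewrite /path_coef subSS subnn bin_small.
exists lam => j; apply/idP/idP => [rise_j | lt_jl].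
  rewrite ltnNge; apply: contraL not_rise_lam => le_lj; rewrite -ltnNge.
  move: rise_j; rewrite -(subnK le_lj); elim: (j - lam) => // d IH.
  by rewrite addSn => /path_coef_rise_pred.
by rewrite ltnNge; apply: contraL lt_jl => /lam_min; rewrite -leqNgt.
Qed.

Lemma rise_fall_unimodal (a : nat -> nat) i : 0 < a 0 ->
    (forall j, j < i -> a j < a j.+1) -> (forall j, i <= j -> a j.+1 <= a j) ->
  unimodal a /\ is_mode a i.
Proof.
move=> a0_gt0 rise fall; split; first by exists i; split=> j ij; [apply/ltnW/rise | apply: fall].
by split=> //; case: i rise {fall} => //= i; apply.
Qed.

Lemma rise_gap_fall_unimodal (a : nat -> nat) lam : 0 < a 0 ->
    (forall j, j < lam -> a j < a j.+1) -> (forall j, lam < j -> a j.+1 <= a j) ->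
  unimodal a /\ exists2 i, is_mode a i & i = lam \/ i = lam.+1.
Proof.
move=> a0_gt0 rise fall; have [fall_lam | rise_lam] := leqP (a lam.+1) (a lam).
  have [|unimod mode] := rise_fall_unimodal a0_gt0 rise (i := lam).
    by move=> j; rewrite leq_eqVlt => /predU1P [<- | /fall].
  by split=> //; exists lam; [|left].
have [|unimod mode] := rise_fall_unimodal a0_gt0 _ fall (i := lam.+1).
  by move=> j; rewrite ltnS leq_eqVlt => /predU1P [-> | /rise].
by split=> //; exists lam.+1; [|right].
Qed.

Lemma rise_fall_comb (a P Q : nat -> nat) lam :
    (forall j, a j = P j + (if j is j'.+1 then P j' + Q j' else 0)) ->
    (forall j, j < lam -> P j < P j.+1) -> (forall j, lam <= j -> P j.+1 <= P j) ->
    (forall j, j.+1 < lam -> Q j < Q j.+1) -> (forall j, lam <= j -> Q j.+1 <= Q j) ->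
  (forall j, j < lam -> a j < a j.+1) /\ (forall j, lam < j -> a j.+1 <= a j).
Proof.
move=> aE riseP fallP riseQ fallQ; split=> -[|j] lt_j; rewrite !aE //.
- by have := riseP 0 lt_j; lia.
- by have := riseP j.+1 lt_j; have := riseP j (ltnW lt_j); have := riseQ j lt_j; lia.
- by have := fallP j.+1 (ltnW lt_j); have := fallP j lt_j; have := fallQ j lt_j; lia.
Qed.

Theorem proposition3p4 (n : nat) : 5 <= n ->
  unimodal (indep_coef (tadpole_rel 4 n)) /\
  exists i lam : nat,
    [/\ is_mode (indep_coef (tadpole_rel 4 n)) i,
        is_mode (indep_coef (path_rel n.+2)) lam &
        (i = lam \/ i = lam.+1)].
Proof.
move=> _.
have [lam riseE] := path_coef_rise_threshold n.+2.
have riseP j : j < lam -> path_coef n.+2 j < path_coef n.+2 j.+1 by rewrite riseE.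
have fallP j : lam <= j -> path_coef n.+2 j.+1 <= path_coef n.+2 j by rewrite leqNgt -riseE -leqNgt.
have riseQ j : j.+1 < lam -> path_coef n j < path_coef n j.+1.
  by rewrite -riseE => /path_coef_rise_subSS.
have fallQ j : lam <= j -> path_coef n j.+1 <= path_coef n j.
  by rewrite leqNgt -riseE; apply: contraNleq => /path_coef_rise_addSS.
have [rise fall] := rise_fall_comb (indep_coef_tadpole n) riseP fallP riseQ fallQ.
have [|unimod [i mode_i near_i]] := rise_gap_fall_unimodal _ rise fall.
  by rewrite indep_coef_tadpole path_coef0.
have [_ mode_lam] :
    unimodal (indep_coef (path_rel n.+2)) /\ is_mode (indep_coef (path_rel n.+2)) lam.
  apply: rise_fall_unimodal => [|j|j]; rewrite !indep_coef_path ?path_coef0 //.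
  - exact: riseP.
  - exact: fallP.
by split=> //; exists i, lam.
Qed.
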